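(* Let $X$ be a real reflexive Banach space such that both $X$ and $X^*$ are locally uniformly convex, let $A:X\supset D(A)\to 2^{X^*}$ be a maximal monotone operator, and let $\varphi$ be an arbitrary gauge function. Then the mappings $(\lambda,x)\mapsto A^\varphi_\lambda x$ from $(0,\infty)\times X$ to $X^*$ and $(\lambda,x)\mapsto J^\varphi_\lambda x$ from $(0,\infty)\times X$ to $X$ are continuous (with respect to the norm topologies).
   Context: A gauge function is a strictly increasing continuous $\varphi:[0,\infty)\to[0,\infty)$ with $\varphi(0)=0$, $\varphi(r)\to\infty$ as $r\to\infty$; $J_\varphi:X\to X^*$ is the duality mapping $J_\varphi x$ = the unique $x^*\in X^*$ with $\langle x^*,x\rangle=\varphi(\|x\|)\|x\|$, $\|x^*\|=\varphi(\|x\|)$ (single-valued here, and a bijection of $X$ onto $X^*$ whose inverse is the duality mapping of $X^*$ with gauge $\varphi^{-1}$). A space is locally uniformly convex if for every $x_0$ with $\|x_0\|=1$ and $\varepsilon\in(0,2]$ there is $\delta>0$ such that $\|x\|=1$, $\|x-x_0\|\ge\varepsilon$ imply $\|x+x_0\|\le2(1-\delta)$. $A$ is maximal monotone: $\langle u-v,x-y\rangle\ge0$ for $u\in Ax$, $v\in Ay$, and its graph is maximal among graphs of monotone operators. For $\lambda>0$ and $x\in X$, the inclusion $0\in J_\varphi(x_\lambda-x)+\lambda A x_\lambda$ has a unique solution $x_\lambda\in D(A)$; the generalized resolvent and Yosida approximant are defined by $J^\varphi_\lambda x:=x_\lambda$ and $A^\varphi_\lambda x:=\frac1\lambda J_\varphi(x-J^\varphi_\lambda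 x)$. Thus $A^\varphi_\lambda x\in A(J^\varphi_\lambda x)$ and $x=J^\varphi_\lambda x+J_\varphi^{-1}(\lambda A^\varphi_\lambda x)$. *)

From HB Require Import structures.
From mathcomp Require Import all_boot all_order all_algebra.
From mathcomp Require Import all_classical all_reals all_analysis.
Set Implicit Arguments. Unset Strict Implicit. Unset Printing Implicit Defensive.
Import Order.TTheory GRing.Theory Num.Theory.
Import numFieldNormedType.Exports.
Local Open Scope classical_set_scope.
Local Open Scope ring_scope.

Section Defs.
Context {R : realType} {X : normedModType R}.

Definition dual_elem (f : X -> R) : Prop :=
  (forall (a : R) (x y : X), f (a *: x + y) = a * f x + f y) /\ continuous f.

Definition dnorm (f : X -> R) : R :=
  sup [set `|f x| | x in [set x : X | `|x| <= 1]].

Definition reflexive_space : Prop :=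
  forall Phi : (X -> R) -> R,
    (forall (a : R) (f g : X -> R), dual_elem f -> dual_elem g ->
        Phi (fun y => a * f y + g y) = a * Phi f + Phi g) ->
    (exists M : R, forall f, dual_elem f -> `|Phi f| <= M * dnorm f) ->
    exists x : X, forall f, dual_elem f -> Phi f = f x.

Definition loc_unif_convex : Prop :=
  forall x0 : X, `|x0| = 1 -> forall eps : R, 0 < eps <= 2 ->
    exists2 delta : R, 0 < delta &
      forall x : X, `|x| = 1 -> eps <= `|x - x0| -> `|x + x0| <= 2 * (1 - delta).

Definition dual_loc_unif_convex : Prop :=
  forall f0 : X -> R, dual_elem f0 -> dnorm f0 = 1 -> forall eps : R, 0 < eps <= 2 ->
    exists2 delta : R, 0 < delta &
      forall f : X -> R, dual_elem f -> dnorm f = 1 ->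
        eps <= dnorm (fun y => f y - f0 y) ->
        dnorm (fun y => f y + f0 y) <= 2 * (1 - delta).

Definition gauge (phi : R -> R) : Prop :=
  phi 0 = 0 /\
  (forall r s : R, 0 <= r -> r < s -> phi r < phi s) /\
  {within [set r : R | 0 <= r], continuous phi} /\
  (forall M : R, exists N : R, forall r, N <= r -> M <= phi r).

Definition monotone_op (A : X -> set (X -> R)) : Prop :=
  (forall x u, A x u -> dual_elem u) /\
  (forall x y u v, A x u -> A y v -> 0 <= u (x - y) - v (x - y)).

Definition maximal_monotone (A : X -> set (X -> R)) : Prop :=
  monotone_op A /\
  forall B : X -> set (X -> R), monotone_op B ->
    (forall x u, A x u -> B x u) -> (forall x u, B x u -> A x u).

Definition domain (A : X -> set (X -> R)) : set X := [set x | exists u, A x u].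

Definition duality_value (phi : R -> R) (x : X) (xs : X -> R) : Prop :=
  dual_elem xs /\ xs x = phi `|x| * `|x| /\ dnorm xs = phi `|x|.

Definition yosida (J : X -> (X -> R)) (Jres : R -> X -> X) (l : R) (x : X) : X -> R :=
  fun y => l^-1 * J (x - Jres l x) y.

End Defs.

(* Put a = J_l x - x and b = J_m y - y, so that -J_phi(a)/l and -J_phi(b)/m lie in A at J_l x and
   J_m y.  Monotonicity of A, tested on these two points, gives an inequality whose error terms
   vanish as (l, x) -> (m, y); since phi is strictly increasing it forces |a| -> |b| and
   <J_phi b, a> -> phi(|b|) |b|, and local uniform convexity of X turns this into a -> b.  Hence
   J_l x = x + a is continuous.  The Yosida approximant l^-1 J_phi(-a) is then continuous as
   well, because local uniform convexity of X^* makes J_phi norm-to-norm continuous. *)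

From HB Require Import structures.
From mathcomp Require Import all_boot all_order all_algebra.
From mathcomp Require Import all_classical all_reals all_analysis.
From mathcomp Require Import ring lra.
Import Order.TTheory GRing.Theory Num.Theory.
Import numFieldNormedType.Exports.
Local Open Scope classical_set_scope.
Local Open Scope ring_scope.
Set Implicit Arguments. Unset Strict Implicit.

Lemma small_mul_lt (R : realFieldType) (C c : R) : 0 <= C -> 0 < c ->
  exists2 delta, 0 < delta & forall t, 0 <= t -> t < delta -> t * C < c.
Proof.
move=> C0 c0; have C1 : 0 < C + 1 by lra.
exists (c / (C + 1)) => [|t t0]; first by rewrite divr_gt0.
rewrite ltr_pdivlMr // => ht; apply: le_lt_trans ht.
by rewrite ler_wpM2l // lerDl.
Qed.

Lemma ratio_lower_bound (R : realFieldType) (B pB A t eta delta : R) :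
  0 < pB -> 0 < A -> 0 <= delta -> 0 <= eta -> A < B + eta -> eta <= pB * B ->
  eta * (1 + pB) <= 2 * delta * pB * B -> pB * B - eta < pB * A * t -> 1 - 2 * delta < t.
Proof.
move=> pB0 A0 delta0 eta0 hA h1 h2 h3; rewrite ltNge; apply/negP => ht.
have [t0|t0] := ltP t 0.
  have : pB * A * t < 0 by rewrite pmulr_rlt0 // mulr_gt0.
  lra.
have : pB * (A * t) <= pB * ((B + eta) * (1 - 2 * delta)).
  by rewrite ler_pM2l // ler_pM // ?ltW //; lra.
have : 0 <= delta * eta * pB by rewrite !mulr_ge0 // ltW.
lra.
Qed.

Lemma ler_dist_inv (R : realFieldType) (l m : R) : 0 < m -> m / 2 < l ->
  `|l^-1 - m^-1| <= `|l - m| * (2 / m ^+ 2).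
Proof.
move=> m0 hlm; have l0 : 0 < l by apply: lt_trans hlm; rewrite divr_gt0.
have -> : l^-1 - m^-1 = (m - l) / (l * m) by field; rewrite !gt_eqF.
have h1 : 1 <= 2 / m ^+ 2 * (l * m).
  have -> : 2 / m ^+ 2 * (l * m) = 2 * l / m by field; rewrite gt_eqF.
  by rewrite ler_pdivlMr // mul1r; lra.
rewrite normrM normfV (gtr0_norm (mulr_gt0 l0 m0)) distrC ler_pdivrMr ?mulr_gt0 //.
by rewrite -mulrA -{1}[`|l - m|]mulr1 ler_wpM2l.
Qed.

Section DualSpace.
Context {R : realType} {X : normedModType R}.
Implicit Types (f g : X -> R) (x y : X).

Lemma dual_elem0 f : dual_elem f -> f 0 = 0.
Proof. by case=> lin _; have := lin 1 0 0; rewrite scale1r addr0 mul1r => h; lra. Qed.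

Lemma dual_elemZ f a x : dual_elem f -> f (a *: x) = a * f x.
Proof. by move=> hf; have := hf.1 a x 0; rewrite !addr0 dual_elem0 // addr0. Qed.

Lemma dual_elemD f x y : dual_elem f -> f (x + y) = f x + f y.
Proof. by move=> hf; have := hf.1 1 x y; rewrite scale1r mul1r. Qed.

Lemma dual_elemB f x y : dual_elem f -> f (x - y) = f x - f y.
Proof. by move=> hf; rewrite dual_elemD // -scaleN1r dual_elemZ // mulN1r. Qed.

Lemma dual_elem_scale a f : dual_elem f -> dual_elem (fun y => a * f y).
Proof.
move=> hf; split; first by move=> c x y; rewrite hf.1; ring.
by move=> x; apply: cvgM; [exact: cvg_cst | exact: hf.2].
Qed.

Lemma dual_elem_add f g : dual_elem f -> dual_elem g -> dual_elem (fun y => f y + g y).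
Proof.
move=> hf hg; split; first by move=> c x y; rewrite hf.1 hg.1; ring.
by move=> x; apply: cvgD; [exact: hf.2 | exact: hg.2].
Qed.

Lemma dual_elem_sub f g : dual_elem f -> dual_elem g -> dual_elem (fun y => f y - g y).
Proof.
move=> hf hg; split; first by move=> c x y; rewrite hf.1 hg.1; ring.
by move=> x; apply: cvgB; [exact: hf.2 | exact: hg.2].
Qed.

(* Continuity at 0 gives a ball of radius d on which |f| < 1; rescaling yields the bound 2/d. *)
Lemma dual_elem_bounded f : dual_elem f ->
  exists2 M, 0 < M & forall x, `|f x| <= M * `|x|.
Proof.
move=> hf; have := @cvgr_dist_lt _ _ _ _ _ f (f 0) (hf.2 0) 1 ltr01.
rewrite dual_elem0 // => /(_ _) /(nbhs_ballP _ _) [d /= d0 Hd].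
exists (2 / d); first by rewrite divr_gt0.
move=> x; have [->|x0] := eqVneq x 0; first by rewrite dual_elem0 // !normr0 mulr0.
have nx : 0 < `|x| by rewrite normr_gt0.
set c := d / (2 * `|x|); have c0 : 0 < c by rewrite divr_gt0 // mulr_gt0.
have : ball (0 : X) d (c *: x).
  rewrite -ball_normE /ball_ /= sub0r normrN normrZ gtr0_norm //.
  have -> : c * `|x| = d / 2 by rewrite /c; field; rewrite gt_eqF.
  lra.
move/Hd; rewrite sub0r normrN dual_elemZ // normrM gtr0_norm // => hc.
rewrite -(ler_pM2l c0) mulrA.
suff -> : c * (2 / d) * `|x| = 1 by exact: ltW.
by rewrite /c; field; rewrite !gt_eqF.
Qed.

Lemma dnorm_has_ubound f : dual_elem f ->
  has_ubound [set `|f x| | x in [set x : X | `|x| <= 1]].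
Proof.
move=> hf; have [M M0 HM] := dual_elem_bounded hf.
exists M => _ [x /= hx <-]; apply: (le_trans (HM x)).
by rewrite -[leRHS]mulr1 ler_wpM2l // ltW.
Qed.

Lemma ler_dnorm f x : dual_elem f -> `|f x| <= dnorm f * `|x|.
Proof.
move=> hf; have [->|x0] := eqVneq x 0; first by rewrite dual_elem0 // !normr0 mulr0.
have nx : 0 < `|x| by rewrite normr_gt0.
have : `|f (`|x|^-1 *: x)| <= dnorm f.
  apply: (ub_le_sup (dnorm_has_ubound hf)); exists (`|x|^-1 *: x) => //=.
  by rewrite normrZ normfV normr_id mulVf ?gt_eqF.
by rewrite dual_elemZ // normrM normfV normr_id -ler_pdivrMr // mulrC.
Qed.

Lemma dnorm_ge0 f : dual_elem f -> 0 <= dnorm f.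
Proof.
move=> hf; have := ub_le_sup (dnorm_has_ubound hf) (ex_intro2 _ _ 0 _ erefl : _ `|f 0|).
by rewrite dual_elem0 // normr0; apply; rewrite /= normr0.
Qed.

Lemma dnorm_le f M : dual_elem f -> 0 <= M ->
  (forall x, `|f x| <= M * `|x|) -> dnorm f <= M.
Proof.
move=> hf M0 HM; apply: ge_sup.
  by exists 0, 0; rewrite /= ?normr0 ?ler01 // dual_elem0 // normr0.
move=> _ [x /= hx <-]; apply: (le_trans (HM x)).
by rewrite -[leRHS]mulr1 ler_wpM2l.
Qed.

End DualSpace.

Section Gauge.
Context {R : realType} (phi : R -> R).
Hypothesis hg : gauge phi.

Lemma gauge_lt r s : 0 <= r -> r < s -> phi r < phi s.
Proof. exact: hg.2.1. Qed.

Lemma gauge_le r s : 0 <= r -> r <= s -> phi r <= phi s.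
Proof.
move=> r0; rewrite le_eqVlt => /orP[/eqP-> //|rs].
exact/ltW/gauge_lt.
Qed.

Lemma gauge_ge0 r : 0 <= r -> 0 <= phi r.
Proof. by move=> r0; rewrite -hg.1; apply: gauge_le. Qed.

Lemma gauge_gt0 r : 0 < r -> 0 < phi r.
Proof. by move=> r0; rewrite -hg.1; apply: gauge_lt. Qed.

Lemma gauge_diff_mul_ge0 r s : 0 <= r -> 0 <= s -> 0 <= (phi r - phi s) * (r - s).
Proof.
move=> r0 s0; have [rs|sr] := leP r s.
  by rewrite mulr_le0 // subr_le0 // gauge_le.
by rewrite mulr_ge0 // subr_ge0 ?gauge_le // ltW.
Qed.

Lemma gauge_continuous b e : 0 <= b -> 0 < e -> exists2 d, 0 < d &
  forall r, 0 <= r -> `|r - b| < d -> `|phi r - phi b| < e.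
Proof.
move=> b0 e0; have [_ [_ [hc _]]] := hg.
have : nbhs (b : subspace [set r : R | 0 <= r]) [set t | `|phi b - phi t| < e].
  by apply: (@cvgr_dist_lt _ _ _ _ _ phi (phi b) (hc b) e e0); exact: subspace_filter.
case/(nbhs_subspace_ex _ (b0 : [set r : R | 0 <= r] b)) => V hV eqV.
have [d /= d0 HV] := (nbhs_ballP _ _).1 hV.
exists d => // r r0 hr.
have : ball b d r by rewrite -ball_normE /= distrC.
move/HV => Vr.
have : ([set t | `|phi b - phi t| < e] `&` [set r : R | 0 <= r]) r by rewrite eqV.
by case; rewrite /= distrC.
Qed.

Lemma gauge_gap B eta : 0 <= B -> 0 < eta -> exists2 c, 0 < c &
  forall t, 0 <= t -> eta <= `|t - B| -> c <= (phi t - phi B) * (t - B).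
Proof.
move=> B0 eta0.
have k10 : 0 < phi (B + eta) - phi B by rewrite subr_gt0 gauge_lt //; lra.
have above t : B + eta <= t ->
    eta * (phi (B + eta) - phi B) <= (phi t - phi B) * (t - B).
  move=> ht; rewrite mulrC ler_pM //; [exact: ltW | exact: ltW | | lra].
  by rewrite lerB // gauge_le //; lra.
have [Beta|etaB] := ltP B eta.
  exists (eta * (phi (B + eta) - phi B)); first by rewrite mulr_gt0.
  move=> t t0; rewrite ler_normr => /orP[h|h]; apply: above; lra.
have k20 : 0 < phi B - phi (B - eta) by rewrite subr_gt0 gauge_lt //; lra.
set k := Num.min (phi (B + eta) - phi B) (phi B - phi (B - eta)).
have k0 : 0 < k by rewrite lt_min k10 k20.
exists (eta * k); first by rewrite mulr_gt0.
move=> t t0; have [tB|Bt] := leP B t.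
  rewrite ger0_norm ?subr_ge0 // => ht; apply: le_trans (above t _); last lra.
  by rewrite ler_wpM2l ?ge_min ?lexx // ltW.
rewrite ltr0_norm ?subr_lt0 // => ht.
have -> : (phi t - phi B) * (t - B) = (B - t) * (phi B - phi t) by ring.
rewrite ler_pM //; [exact: ltW | exact: ltW | lra |].
apply: le_trans (_ : phi B - phi (B - eta) <= _); first by rewrite ge_min lexx orbT.
by rewrite lerB // gauge_le //; lra.
Qed.

End Gauge.

Section Convexity.
Context {R : realType} {X : normedModType R}.

Lemma luc_near : loc_unif_convex (R:=R) (X:=X) ->
  forall x0 : X, `|x0| = 1 -> forall eps, 0 < eps -> exists2 delta, 0 < delta &
    forall x : X, `|x| = 1 -> 2 * (1 - delta) < `|x + x0| -> `|x - x0| < eps.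
Proof.
move=> hl x0 x01 eps eps0.
have eps2 : 0 < Num.min eps 2 <= 2 by rewrite lt_min eps0 ltr0n ge_min lexx orbT.
have [delta delta0 Hd] := hl x0 x01 _ eps2.
exists delta => // x x1 hx; rewrite ltNge; apply/negP => hge.
have : Num.min eps 2 <= `|x - x0| by rewrite ge_min hge.
by move/(Hd x x1); rewrite leNgt hx.
Qed.

Lemma dual_luc_near : dual_loc_unif_convex (R:=R) (X:=X) ->
  forall f0 : X -> R, dual_elem f0 -> dnorm f0 = 1 -> forall eps, 0 < eps ->
  exists2 delta, 0 < delta & forall (f : X -> R) (z : X), dual_elem f -> dnorm f = 1 ->
    2 * (1 - delta) * `|z| < f z + f0 z -> dnorm (fun y => f y - f0 y) < eps.
Proof.
move=> hd f0 hf0 f01 eps eps0.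
have eps2 : 0 < Num.min eps 2 <= 2 by rewrite lt_min eps0 ltr0n ge_min lexx orbT.
have [delta delta0 Hd] := hd f0 hf0 f01 _ eps2.
exists delta => // f z hf f1 hz; rewrite ltNge; apply/negP => hge.
have /(Hd f hf f1) hs : Num.min eps 2 <= dnorm (fun y => f y - f0 y) by rewrite ge_min hge.
have := ler_dnorm z (dual_elem_add hf hf0).
have := ler_norm (f z + f0 z).
have : dnorm (fun y => f y + f0 y) * `|z| <= 2 * (1 - delta) * `|z| by rewrite ler_wpM2r.
lra.
Qed.

End Convexity.

Section DualityMap.
Context {R : realType} {X : normedModType R} (phi : R -> R) (J : X -> X -> R).
Hypothesis hg : gauge phi.
Hypothesis hJ : forall x : X, duality_value phi x (J x).

Lemma duality_dual x : dual_elem (J x). Proof. exact: (hJ x).1. Qed.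

Lemma duality_self x : J x x = phi `|x| * `|x|. Proof. exact: (hJ x).2.1. Qed.

Lemma ler_duality x y : `|J x y| <= phi `|x| * `|y|.
Proof. by rewrite -(hJ x).2.2; apply/ler_dnorm/duality_dual. Qed.

Definition duality_unit x : X -> R := fun y => (phi `|x|)^-1 * J x y.

Lemma duality_unit_dual x : dual_elem (duality_unit x).
Proof. exact/dual_elem_scale/duality_dual. Qed.

Lemma duality_unit_self x : x != 0 -> duality_unit x x = `|x|.
Proof.
move=> x0; have px : 0 < phi `|x| by rewrite gauge_gt0 // normr_gt0.
by rewrite /duality_unit duality_self mulrA mulVf ?gt_eqF ?mul1r.
Qed.

Lemma ler_duality_unit x y : x != 0 -> `|duality_unit x y| <= `|y|.
Proof.
move=> x0; have px : 0 < phi `|x| by rewrite gauge_gt0 // normr_gt0.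
rewrite normrM gtr0_norm ?invr_gt0 // -[`|y|](mulKf (lt0r_neq0 px)).
by rewrite ler_pM2l ?invr_gt0 // ler_duality.
Qed.

Lemma dnorm_duality_unit x : x != 0 -> dnorm (duality_unit x) = 1.
Proof.
move=> x0; apply/eqP; rewrite eq_le; apply/andP; split.
  apply: dnorm_le; [exact: duality_unit_dual | exact: ler01 |].
  by move=> y; rewrite mul1r ler_duality_unit.
have := ler_dnorm x (duality_unit_dual x); rewrite duality_unit_self // ger0_norm //.
by rewrite -{1}[`|x|]mul1r ler_pM2r ?normr_gt0.
Qed.

Lemma duality_unit_ge x d : x != 0 -> `|x| - `|x - d| <= duality_unit x d.
Proof.
move=> x0; have := ler_duality_unit (d - x) x0.
rewrite /duality_unit (dual_elemB _ _ (duality_dual x)) mulrBr -/(duality_unit x x).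
by rewrite duality_unit_self // ler_norml (distrC d) => /andP[h _]; lra.
Qed.

Lemma dnorm_duality_sub c d : c != 0 -> d != 0 ->
  dnorm (fun y => J c y - J d y) <=
  phi `|c| * dnorm (fun y => duality_unit c y - duality_unit d y) + `|phi `|c| - phi `|d| |.
Proof.
move=> c0 d0; have pc0 : 0 < phi `|c| by rewrite gauge_gt0 // normr_gt0.
have pd0 : 0 < phi `|d| by rewrite gauge_gt0 // normr_gt0.
have hsub := dual_elem_sub (duality_unit_dual c) (duality_unit_dual d).
apply: dnorm_le; first by apply: dual_elem_sub; apply: duality_dual.
  by rewrite addr_ge0 ?mulr_ge0 ?dnorm_ge0 // ltW.
move=> y; have -> : J c y - J d y = phi `|c| * (duality_unit c y - duality_unit d y)
    + (phi `|c| - phi `|d|) * duality_unit d y.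
  by rewrite /duality_unit; field; rewrite !gt_eqF.
apply: le_trans (ler_normD _ _) _; rewrite [X in _ <= X]mulrDl; apply: lerD.
  by rewrite normrM gtr0_norm // -mulrA ler_pM2l //; exact: ler_dnorm y hsub.
by rewrite normrM ler_wpM2l // ler_duality_unit.
Qed.

(* Near d, the normalized functionals J c / phi|c| norm d almost as well as J d / phi|d| does, so
   dual local uniform convexity pins them together. *)
Lemma duality_unit_continuous : dual_loc_unif_convex (R:=R) (X:=X) ->
  forall d eps, d != 0 -> 0 < eps -> exists2 delta, 0 < delta & forall c, `|c - d| < delta ->
    c != 0 /\ dnorm (fun y => duality_unit c y - duality_unit d y) < eps.
Proof.
move=> hd d eps d0 eps0; have nd : 0 < `|d| by rewrite normr_gt0.
have [delta delta0 Hd] := dual_luc_near hd (duality_unit_dual d) (dnorm_duality_unit d0) eps0.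
exists (Num.min delta 1 * `|d|); first by rewrite mulr_gt0 // lt_min delta0 ltr01.
move=> c hc.
have hcd : `|c - d| < delta * `|d| by apply: lt_le_trans hc _; rewrite ler_wpM2r ?ge_min ?lexx // ltW.
have hcd1 : `|c - d| < `|d| by apply: lt_le_trans hc _; rewrite ger_pMl // ge_min lexx orbT.
have nc : `|d| - `|c - d| <= `|c| by have := lerB_dist d c; rewrite (distrC d c) => h; lra.
have c0 : c != 0 by rewrite -normr_gt0; lra.
split=> //; apply: (Hd _ d (duality_unit_dual c) (dnorm_duality_unit c0)).
have := duality_unit_ge d c0; rewrite duality_unit_self //; lra.
Qed.

Lemma duality_continuous : dual_loc_unif_convex (R:=R) (X:=X) ->
  forall d e, 0 < e -> exists2 delta, 0 < delta &
    forall c, `|c - d| < delta -> dnorm (fun y => J c y - J d y) < e.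
Proof.
move=> hd d e e0; have [->|d0] := eqVneq d 0.
  have J0 y : J 0 y = 0.
    apply/eqP; rewrite -normr_le0; apply: le_trans (ler_duality 0 y) _.
    by rewrite normr0 hg.1 mul0r.
  have [delta delta0 Hd] := gauge_continuous hg (lexx 0) e0.
  exists delta => // c; rewrite subr0 => hc.
  apply: le_lt_trans (_ : phi `|c| < e).
    apply: dnorm_le; [by apply: dual_elem_sub; apply: duality_dual | by rewrite gauge_ge0 |].
    by move=> y; rewrite J0 subr0 ler_duality.
  by have := Hd `|c| (normr_ge0 c); rewrite subr0 normr_id hg.1 subr0 => /(_ hc)/ltr_normlW.
have pd0 : 0 < phi `|d| by rewrite gauge_gt0 // normr_gt0.
have q0 : 0 < e / (4 * phi `|d|) by rewrite divr_gt0 // mulr_gt0.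
have [du du0 Hu] := duality_unit_continuous hd d0 q0.
have [dp dp0 Hp] : exists2 dp, 0 < dp & forall r, 0 <= r -> `|r - `|d| | < dp ->
    `|phi r - phi `|d| | < Num.min (e / 2) (phi `|d|).
  by apply: gauge_continuous; rewrite //= ?normr_ge0 // lt_min pd0 divr_gt0.
exists (Num.min du dp); first by rewrite lt_min du0.
move=> c; rewrite lt_min => /andP[hcu hcp]; have [c0 hD] := Hu c hcu.
have := Hp `|c| (normr_ge0 c) (le_lt_trans (ler_dist_dist c d) hcp).
rewrite lt_min => /andP[hpe /ltr_normlW hpd].
have pc0 : 0 < phi `|c| by rewrite gauge_gt0 // normr_gt0.
apply: le_lt_trans (dnorm_duality_sub c0 d0) _.
have : phi `|c| * dnorm (fun y => duality_unit c y - duality_unit d y)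
    <= phi `|c| * (e / (4 * phi `|d|)) by rewrite ler_pM2l // ltW.
have : phi `|c| * (e / (4 * phi `|d|)) < 2 * phi `|d| * (e / (4 * phi `|d|)).
  by rewrite ltr_pM2r //; lra.
have -> : 2 * phi `|d| * (e / (4 * phi `|d|)) = e / 2 by field; rewrite gt_eqF.
lra.
Qed.

(* With x0 = b / |b| and g = J b / phi |b|, local uniform convexity at x0 turns g x ~ 1 into
   x ~ x0; the norms then take care of the radial part. *)
Lemma duality_luc_near : loc_unif_convex (R:=R) (X:=X) ->
  forall (b : X) e, 0 < e -> exists2 eta, 0 < eta & forall a : X,
    `| `|a| - `|b| | < eta -> phi `|b| * `|b| - eta < J b a -> `|a - b| < e.
Proof.
move=> hl b e e0; have [->|b0] := eqVneq b 0.
  by exists e => // a; rewrite normr0 !subr0 normr_id.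
have B0 : 0 < `|b| by rewrite normr_gt0.
have pB0 : 0 < phi `|b| by rewrite gauge_gt0.
pose x0 := `|b|^-1 *: b.
have x01 : `|x0| = 1 by rewrite normrZ normfV normr_id mulVf ?gt_eqF.
have gx0 : duality_unit b x0 = 1.
  rewrite /x0 (dual_elemZ _ _ (duality_unit_dual b)) duality_unit_self //.
  by rewrite mulVf ?gt_eqF.
have [delta delta0 Hd] := luc_near hl x01 (divr_gt0 e0 (mulr_gt0 (ltr0Sn _ 1) B0)).
have Hdir x : `|x| = 1 -> 1 - 2 * delta < duality_unit b x -> `|x - x0| < e / (2 * `|b|).
  move=> x1 hx; apply: (Hd x x1); apply: lt_le_trans (ler_duality_unit (x + x0) b0).
  by apply: lt_le_trans (ler_norm _); rewrite (dual_elemD _ _ (duality_unit_dual b)) gx0; lra.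
set eta := Num.min (Num.min (e / 2) (`|b| / 2))
  (Num.min (phi `|b| * `|b|) (2 * delta * phi `|b| * `|b| / (1 + phi `|b|))).
have eta0 : 0 < eta by rewrite !lt_min !divr_gt0 ?mulr_gt0 ?addr_gt0.
have eta1 : eta <= e / 2 by rewrite !ge_min lexx.
have eta2 : eta <= `|b| / 2 by rewrite !ge_min lexx !orbT.
have eta3 : eta <= phi `|b| * `|b| by rewrite !ge_min lexx !orbT.
have eta4 : eta * (1 + phi `|b|) <= 2 * delta * phi `|b| * `|b|.
  by rewrite -ler_pdivlMr ?addr_gt0 // !ge_min lexx !orbT.
exists eta => // a; rewrite ltr_distlC => /andP[hA1 hA2] hJa.
have A0 : 0 < `|a| by lra.
pose x := `|a|^-1 *: a.
have x1 : `|x| = 1 by rewrite normrZ normfV normr_id mulVf ?gt_eqF.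
have ea : a = `|a| *: x by rewrite /x scalerA mulfV ?gt_eqF ?scale1r.
have hx : 1 - 2 * delta < duality_unit b x.
  apply: (ratio_lower_bound (B := `|b|) (A := `|a|) pB0 A0 (ltW delta0) (ltW eta0)) => //; first lra.
  suff <- : J b a = phi `|b| * `|a| * duality_unit b x by [].
  rewrite {1}ea (dual_elemZ _ _ (duality_dual b)) /duality_unit.
  by field; rewrite gt_eqF.
have -> : a - b = (`|a| - `|b|) *: x + `|b| *: (x - x0).
  have eb : b = `|b| *: x0 by rewrite /x0 scalerA mulfV ?gt_eqF ?scale1r.
  by rewrite {1}ea {1}eb scalerBl scalerBr addrA subrK.
apply: le_lt_trans (ler_normD _ _) _; rewrite normrZ x1 mulr1 normrZ (gtr0_norm B0).
have : `|b| * `|x - x0| < `|b| * (e / (2 * `|b|)) by rewrite ltr_pM2l // Hdir.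
have -> : `|b| * (e / (2 * `|b|)) = e / 2 by field; rewrite gt_eqF.
have : `| `|a| - `|b| | < eta by rewrite ltr_distlC; lra.
lra.
Qed.

End DualityMap.

Section GaugeEstimate.
Context {R : realType} (phi : R -> R).
Hypothesis hg : gauge phi.

(* The shape of the inequality that monotonicity of A yields ([resolvent_shift_estimate]):
   A and B are the norms of the resolvent shifts a and b, l and m the step sizes, s the distance
   of the base points and E the defect phi(B) A - <J b, a> >= 0. *)
Definition shift_estimate (m l s A B E : R) : Prop :=
  m * (E + (phi A - phi B) * (A - B)) <= s * (l * phi B + m * phi A) + `|l - m| * phi B * (A + B).

(* For A > B + 1 the left side is at least m k (A - B) with k = phi (B + 1) - phi B, while the
   right side is small multiples of (A - B), of the left side itself, and of constants. *)
Lemma shift_estimate_bounded m B : 0 < m -> 0 <= B -> exists2 delta, 0 < delta &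
  forall l s A E, 0 <= s -> s < delta -> `|l - m| < delta -> 0 <= A -> 0 <= E ->
    shift_estimate m l s A B E -> A <= B + 1.
Proof.
move=> m0 B0; have pB0 := gauge_ge0 hg B0.
have k0 : 0 < phi (B + 1) - phi B by rewrite subr_gt0 gauge_lt //; lra.
have mk0 : 0 < m * (phi (B + 1) - phi B) / 4 by rewrite divr_gt0 ?mulr_gt0.
have [delta_s delta_s0 Hs] := small_mul_lt (mulr_ge0 (mulr_ge0 (ler0n _ 3) (ltW m0)) pB0) mk0.
have hB1 : 0 <= phi B * (2 * B + 1) by rewrite mulr_ge0 //; lra.
have [delta_t delta_t0 Ht] := small_mul_lt hB1 mk0.
exists (Num.min (Num.min (1 / 4) m) (Num.min delta_s delta_t)).
  by rewrite !lt_min m0 delta_s0 delta_t0 divr_gt0.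
move=> l s A E s0; rewrite !lt_min => /andP[/andP[s4 _] /andP[ss _]].
move=> /andP[/andP[_ tm] /andP[_ tt]] A0 E0 hest; rewrite leNgt; apply/negP => hA.
set k := phi (B + 1) - phi B in k0 mk0 Hs Ht.
pose G := (phi A - phi B) * (A - B).
have hk : k <= phi A - phi B by rewrite lerB // gauge_le //; lra.
have hG : k * (A - B) <= G by rewrite ler_wpM2r //; lra.
have hpA : phi A - phi B <= G by rewrite -{1}[phi A - phi B]mulr1 ler_wpM2l //; lra.
have l2m : l <= 2 * m by move: tm; rewrite ltr_distlC => /andP[h _]; lra.
have hs := Hs s s0 ss; have ht := Ht _ (normr_ge0 (l - m)) tt.
have f1 : s * (l * phi B) <= s * (2 * m * phi B) by rewrite ler_wpM2l // ler_wpM2r.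
have f2 : s * (m * phi A) <= s * (m * (G + phi B)) by rewrite ler_wpM2l // ler_wpM2l; lra.
have f3 : `|l - m| * phi B <= m * k / 4.
  apply: le_trans (ltW ht); rewrite ler_wpM2l // ler_peMr //; lra.
have f4 : `|l - m| * phi B * (A - B) <= m * k / 4 * (A - B) by rewrite ler_wpM2r //; lra.
have f5 : m * k * (A - B) <= m * G by rewrite -mulrA ler_wpM2l // ltW.
have f6 : s * (m * G) <= 1 / 4 * (m * G) by rewrite ler_wpM2r ?mulr_ge0 //; lra.
have f7 : m * k <= m * G.
  apply: ler_wpM2l; first exact: ltW.
  have k0' : 0 <= k := ltW k0.
  by apply: le_trans _ hG; rewrite -{1}[k]mulr1 ler_wpM2l //; lra.
have f8 : 0 <= m * E by rewrite mulr_ge0 // ltW.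
have f9 : 0 <= `|l - m| * phi B by rewrite mulr_ge0.
move: hest; rewrite /shift_estimate -/G; lra.
Qed.

(* Once A <= B + 1 the right side is O(s + |l - m|), and [gauge_gap] turns smallness of
   (phi A - phi B) (A - B) into smallness of |A - B|. *)
Lemma shift_estimate_small m B eta : 0 < m -> 0 <= B -> 0 < eta -> exists2 delta, 0 < delta &
  forall l s A E, 0 <= s -> s < delta -> `|l - m| < delta -> 0 <= A -> 0 <= E ->
    shift_estimate m l s A B E -> `|A - B| < eta /\ E < eta.
Proof.
move=> m0 B0 eta0; have pB0 := gauge_ge0 hg B0.
have [delta_b delta_b0 Hb] := shift_estimate_bounded m0 B0.
have [c c0 Hc] := gauge_gap hg B0 eta0.
set c' := Num.min eta c; have c'0 : 0 < c' by rewrite lt_min eta0.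
have hP1 : 0 <= 2 * phi B + phi (B + 1).
  by rewrite addr_ge0 ?mulr_ge0 // gauge_ge0 //; lra.
have [delta_s delta_s0 Hs] := small_mul_lt hP1 (divr_gt0 c'0 (ltr0Sn _ 1)).
have hB1 : 0 <= phi B * (2 * B + 1) / m.
  by rewrite divr_ge0 ?mulr_ge0 //; [lra | exact: ltW].
have [delta_t delta_t0 Ht] := small_mul_lt hB1 (divr_gt0 c'0 (ltr0Sn _ 1)).
exists (Num.min (Num.min delta_b m) (Num.min delta_s delta_t)).
  by rewrite !lt_min delta_b0 m0 delta_s0.
move=> l s A E s0; rewrite !lt_min => /andP[/andP[sb _] /andP[ss _]].
move=> /andP[/andP[tb tm] /andP[_ tt]] A0 E0 hest.
have AB1 : A <= B + 1 by exact: (Hb l s A E).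
have pA1 : phi A <= phi (B + 1) by rewrite gauge_le.
have l2m : l <= 2 * m by move: tm; rewrite ltr_distlC => /andP[h _]; lra.
have hs := Hs s s0 ss; have ht := Ht _ (normr_ge0 (l - m)) tt.
have hEG : m * (E + (phi A - phi B) * (A - B)) < m * c'.
  apply: (le_lt_trans hest); apply: le_lt_trans (_ : m * (s * (2 * phi B + phi (B + 1)))
      + m * (`|l - m| * (phi B * (2 * B + 1) / m)) < _); last first.
    by rewrite -mulrDr ltr_pM2l //; lra.
  apply: lerD.
    rewrite mulrCA ler_wpM2l // mulrDr mulrA; apply: lerD; last by rewrite ler_wpM2l // ltW.
    by rewrite [m * 2]mulrC ler_wpM2r.
  have -> : m * (`|l - m| * (phi B * (2 * B + 1) / m)) = `|l - m| * phi B * (2 * B + 1).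
    by field; rewrite gt_eqF.
  by rewrite ler_wpM2l ?mulr_ge0 //; lra.
rewrite ltr_pM2l // in hEG; have G0 := gauge_diff_mul_ge0 hg A0 B0.
have c'eta : c' <= eta by rewrite ge_min lexx.
have c'c : c' <= c by rewrite ge_min lexx orbT.
split; last by lra.
by rewrite ltNge; apply/negP => /(Hc A A0); lra.
Qed.

End GaugeEstimate.

Section Resolvent.
Context {R : realType} {X : normedModType R} (phi : R -> R) (J : X -> X -> R).
Context (A : X -> set (X -> R)) (Jres : R -> X -> X).
Hypothesis hg : gauge phi.
Hypothesis hJ : forall x : X, duality_value phi x (J x).
Hypothesis hmono : forall x y u v, A x u -> A y v -> 0 <= u (x - y) - v (x - y).
Hypothesis hres : forall (l : R) (x : X), 0 < l ->
  domain A (Jres l x) /\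
  exists u, A (Jres l x) u /\ forall y : X, J (Jres l x - x) y + l * u y = 0.

(* Monotonicity of A tested on -J(a)/l in A(Jres l x) and -J(b)/m in A(Jres m y), where
   Jres l x - Jres m y = a - b + (x - y). *)
Lemma resolvent_monotone l m x y : 0 < l -> 0 < m ->
  m * (J (Jres l x - x) (Jres l x - x) - J (Jres l x - x) (Jres m y - y)
       + J (Jres l x - x) (x - y))
  <= l * (J (Jres m y - y) (Jres l x - x) - J (Jres m y - y) (Jres m y - y)
          + J (Jres m y - y) (x - y)).
Proof.
move=> l0 m0; set a := Jres l x - x; set b := Jres m y - y.
have [_ [u [Au hu]]] := hres x l0; have [_ [v [Av hv]]] := hres y m0.
have := mulr_ge0 (ltW (mulr_gt0 l0 m0)) (hmono Au Av).
set d := Jres l x - Jres m y.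
have ed : d = a - b + (x - y) by rewrite /d /a /b opprB addrAC subrKA subrKA.
have eu : l * u d = - J a d by have := hu d; lra.
have ev : m * v d = - J b d by have := hv d; lra.
have -> : l * m * (u d - v d) = m * (l * u d) - l * (m * v d) by ring.
have Ja := duality_dual hJ a; have Jb := duality_dual hJ b.
rewrite eu ev ed (dual_elemD _ _ Ja) (dual_elemD _ _ Jb) (dual_elemB a b Ja) (dual_elemB a b Jb).
lra.
Qed.

Lemma resolvent_shift_estimate l m x y : 0 < l -> 0 < m ->
  shift_estimate phi m l `|x - y| `|Jres l x - x| `|Jres m y - y|
    (phi `|Jres m y - y| * `|Jres l x - x| - J (Jres m y - y) (Jres l x - x)).
Proof.
move=> l0 m0; have K := resolvent_monotone x y l0 m0.
move: K; set a := Jres l x - x; set b := Jres m y - y; move=> K.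
rewrite !(duality_self hJ) in K; rewrite /shift_estimate.
have pB0 : 0 <= phi `|b| := gauge_ge0 hg (normr_ge0 b).
have := ler_duality hJ a b; rewrite ler_norml => /andP[_ Jab].
have := ler_duality hJ a (x - y); rewrite ler_norml => /andP[Jaxy _].
have := ler_duality hJ b (x - y); rewrite ler_norml => /andP[_ Jbxy].
have Jba : `|J b a - phi `|b| * `|b| | <= phi `|b| * (`|a| + `|b|).
  apply: le_trans (ler_normB _ _) _; rewrite normrM (ger0_norm pB0) normr_id mulrDr.
  by rewrite lerD2r ler_duality.
have f1 : m * J a b <= m * (phi `|a| * `|b|) by rewrite ler_wpM2l // ltW.
have f2 : m * - (phi `|a| * `|x - y|) <= m * J a (x - y) by rewrite ler_wpM2l // ltW.
have f3 : l * J b (x - y) <= l * (phi `|b| * `|x - y|) by rewrite ler_wpM2l // ltW.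
have f4 : (l - m) * (J b a - phi `|b| * `|b|) <= `|l - m| * (phi `|b| * (`|a| + `|b|)).
  by apply: le_trans (ler_norm _) _; rewrite normrM ler_wpM2l.
lra.
Qed.

Hypothesis hl : loc_unif_convex (R:=R) (X:=X).

Lemma resolvent_shift_continuous m y e : 0 < m -> 0 < e ->
  exists2 delta, 0 < delta & forall l x, 0 < l -> `|l - m| < delta -> `|x - y| < delta ->
    `|(Jres l x - x) - (Jres m y - y)| < e.
Proof.
move=> m0 e0; set b := Jres m y - y; have pB0 := gauge_ge0 hg (normr_ge0 b).
have [eta eta0 He] := duality_luc_near hg hJ hl b e0.
(* E, |A - B| < eta' give phi|b| |b| - J b a = E + phi|b| (|b| - |a|) < (1 + phi|b|) eta' < eta. *)
have eta'0 : 0 < eta / (phi `|b| + 2) by rewrite divr_gt0 //; lra.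
have [delta delta0 Hd] := shift_estimate_small hg m0 (normr_ge0 b) eta'0.
exists delta => // l x l_gt0 hlm hxy; set a := Jres l x - x.
have E0 : 0 <= phi `|b| * `|a| - J b a.
  by rewrite subr_ge0; apply: ler_normlW; apply: ler_duality.
have [hAB hE] := Hd l `|x - y| `|a| _ (normr_ge0 _) hxy hlm (normr_ge0 _) E0
  (resolvent_shift_estimate x y l_gt0 m0).
have eeta : eta / (phi `|b| + 2) * (phi `|b| + 2) = eta by field; lra.
have : eta / (phi `|b| + 2) <= eta.
  by rewrite ler_pdivrMr; [rewrite ler_peMr //; [exact: ltW | lra] | lra].
have : phi `|b| * (`|b| - `|a|) <= phi `|b| * (eta / (phi `|b| + 2)).
  by rewrite ler_wpM2l //; apply: le_trans _ (ltW hAB); rewrite (distrC `|a|) ler_norm.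
move=> h1 h2; apply: He; lra.
Qed.

Lemma resolvent_continuous l0 x0 : 0 < l0 -> forall e, 0 < e ->
  exists2 delta, 0 < delta & forall l x, 0 < l -> `|l - l0| < delta -> `|x - x0| < delta ->
    `|Jres l x - Jres l0 x0| < e.
Proof.
move=> l0_gt0 e e0; have e20 : 0 < e / 2 by rewrite divr_gt0.
have [delta delta0 Hd] := resolvent_shift_continuous x0 l0_gt0 e20.
exists (Num.min delta (e / 2)) => [|l x l_gt0]; first by rewrite lt_min delta0.
rewrite !lt_min => /andP[hl1 _] /andP[hx1 hx2]; have := Hd l x l_gt0 hl1 hx1.
have -> : Jres l x - Jres l0 x0 = (Jres l x - x - (Jres l0 x0 - x0)) + (x - x0).
  by rewrite opprB addrAC subrKA subrKA.
move=> h; apply: le_lt_trans (ler_normD _ _) _; lra.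
Qed.

Lemma dnorm_yosida_sub l l0 x x0 : 0 < l -> 0 < l0 ->
  dnorm (fun y => yosida J Jres l x y - yosida J Jres l0 x0 y) <=
  l^-1 * dnorm (fun y => J (x - Jres l x) y - J (x0 - Jres l0 x0) y)
  + `|l^-1 - l0^-1| * phi `|x0 - Jres l0 x0|.
Proof.
move=> l_gt0 l0_gt0; set c := x - Jres l x; set b := x0 - Jres l0 x0.
have hsub := dual_elem_sub (duality_dual hJ c) (duality_dual hJ b).
apply: dnorm_le.
- by apply: dual_elem_sub; apply: dual_elem_scale; apply: duality_dual.
- have l_inv_ge0 : 0 <= l^-1 by rewrite invr_ge0 ltW.
  have := dnorm_ge0 hsub; have := gauge_ge0 hg (normr_ge0 b).
  by move=> *; rewrite addr_ge0 ?mulr_ge0.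
move=> y; rewrite /yosida -/c -/b.
have -> : l^-1 * J c y - l0^-1 * J b y = l^-1 * (J c y - J b y) + (l^-1 - l0^-1) * J b y.
  by ring.
apply: le_trans (ler_normD _ _) _; rewrite [X in _ <= X]mulrDl; apply: lerD.
  by rewrite normrM gtr0_norm ?invr_gt0 // -mulrA ler_pM2l ?invr_gt0 //; exact: ler_dnorm y hsub.
by rewrite normrM -mulrA ler_wpM2l // ler_duality.
Qed.

Lemma yosida_continuous : dual_loc_unif_convex (R:=R) (X:=X) ->
  forall l0 x0, 0 < l0 -> forall e, 0 < e -> exists2 delta, 0 < delta &
    forall l x, 0 < l -> `|l - l0| < delta -> `|x - x0| < delta ->
      dnorm (fun y => yosida J Jres l x y - yosida J Jres l0 x0 y) < e.
Proof.
move=> hd l0 x0 l0_gt0 e e0; set b := x0 - Jres l0 x0.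
have pB0 := gauge_ge0 hg (normr_ge0 b).
have [dJ dJ0 HJ] := duality_continuous hg hJ hd b (mulr_gt0 l0_gt0 (divr_gt0 e0 (ltr0Sn _ 3))).
have [dR dR0 HR] := resolvent_shift_continuous x0 l0_gt0 dJ0.
have hC : 0 <= phi `|b| * (2 / l0 ^+ 2) by rewrite mulr_ge0 // divr_ge0 // exprn_ge0 // ltW.
have [dl dl0 Hl] := small_mul_lt hC (divr_gt0 e0 (ltr0Sn _ 1)).
exists (Num.min (Num.min dR (l0 / 2)) dl); first by rewrite !lt_min dR0 dl0 divr_gt0.
move=> l x l_gt0; rewrite !lt_min => /andP[/andP[hR hl2] hdl] /andP[/andP[hx _] _].
have hc : `|(x - Jres l x) - b| < dJ.
  rewrite /b (_ : _ - _ = - ((Jres l x - x) - (Jres l0 x0 - x0))); last first.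
    by rewrite [RHS]opprD opprK !opprB.
  by rewrite normrN (HR l x l_gt0 hR hx).
have hD := HJ _ hc.
have hl2' : l0 / 2 < l by move: hl2; rewrite ltr_distlC => /andP[_ h]; lra.
have ht := Hl _ (normr_ge0 (l - l0)) hdl; have hinv := ler_dist_inv l0_gt0 hl2'.
apply: le_lt_trans (dnorm_yosida_sub x x0 l_gt0 l0_gt0) _; rewrite -/b.
have h1 : l^-1 * dnorm (fun y => J (x - Jres l x) y - J b y) < e / 2.
  apply: le_lt_trans (_ : l^-1 * (l0 * (e / 4)) < _).
    by rewrite ler_wpM2l ?invr_ge0 ?ltW.
  rewrite mulrC ltr_pdivrMr //.
  have : 0 < e / 2 * (l - l0 / 2) by rewrite mulr_gt0 ?divr_gt0 //; lra.
  lra.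
have h2 : `|l^-1 - l0^-1| * phi `|b| <= `|l - l0| * (phi `|b| * (2 / l0 ^+ 2)).
  by rewrite mulrCA mulrC ler_wpM2l.
lra.
Qed.

End Resolvent.

Unset Implicit Arguments. Set Strict Implicit.

(* Reflexivity and maximality of A only serve to make the resolvent exist, which the statement
   already provides; monotonicity of A is all the argument needs. *)
Theorem theorem3 (R : realType) (X : completeNormedModType R)
  (A : X -> set (X -> R)) (phi : R -> R)
  (J : X -> (X -> R)) (Jres : R -> X -> X) :
  @reflexive_space R X ->
  @loc_unif_convex R X ->
  @dual_loc_unif_convex R X ->
  maximal_monotone A ->
  gauge phi ->
  (* J is the duality mapping J_phi *)
  (forall x : X, duality_value phi x (J x)) ->
  (* Jres l x is the solution x_l of 0 \in J_phi(x_l - x) + l A x_l *)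
  (forall (l : R) (x : X), 0 < l ->
     domain A (Jres l x) /\
     exists u, A (Jres l x) u /\ forall y : X, J (Jres l x - x) y + l * u y = 0) ->
  (* continuity of (l, x) |-> A^phi_l x into X^* *)
  (forall (l0 : R) (x0 : X), 0 < l0 -> forall e : R, 0 < e ->
     exists2 d : R, 0 < d & forall (l : R) (x : X), 0 < l ->
       `|l - l0| < d -> `|x - x0| < d ->
       dnorm (fun y => yosida J Jres l x y - yosida J Jres l0 x0 y) < e) /\
  (* continuity of (l, x) |-> J^phi_l x into X *)
  (forall (l0 : R) (x0 : X), 0 < l0 -> forall e : R, 0 < e ->
     exists2 d : R, 0 < d & forall (l : R) (x : X), 0 < l ->
       `|l - l0| < d -> `|x - x0| < d ->
       `|Jres l x - Jres l0 x0| < e).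
Proof.
move=> _ hl hd [[_ hmono] _] hg hJ hres; split.
- exact: (yosida_continuous hg hJ hmono hres hl hd).
- exact: (resolvent_continuous hg hJ hmono hres hl).
Qed.
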